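(* Let $\Sigma$ be a non-empty finite or countably infinite alphabet, $p$ a positive Bernoulli distribution on $\Sigma$, $A=(Q,\Sigma,\delta,q_s,F)$ a strongly connected DFA, and $b,\epsilon$ real numbers with $0<b\le1$, $\epsilon>0$. Then $\lim_{n\to\infty}\mu_p(G_n(b,\epsilon))=0$.
   Context: $p:\Sigma\to(0,1]$ with $\sum_ap(a)=1$; $\mu_p(a_1\cdots a_n)=\prod_ip(a_i)$, $\mu_p(W)=\sum_{w\in W}\mu_p(w)$. $A_q$ is $A$ with start state $q$; for $w=w_1\cdots w_n$, $A_q[w]$ is the subsequence of those $w_i$ with $\delta^*(q,w_1\cdots w_{i-1})\in F$; $\#_a(v)$ counts occurrences of $a$ in $v$. Define $G_n(b,\epsilon,q)=\{w\in\Sigma^n: |A_q[w]|>bn\ \text{and}\ \sup_{a\in\Sigma}|\#_a(A_q[w])/|A_q[w]|-p(a)|\ge\epsilon\}$ and $G_n(b,\epsilon)=\bigcup_{q\in Q}G_n(b,\epsilon,q)$. *)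

From HB Require Import structures.
From mathcomp Require Import all_boot all_order all_algebra.
From mathcomp Require Import all_classical all_reals all_analysis.
Unset Printing Implicit Defensive.
Import Order.TTheory GRing.Theory Num.Theory.
Local Open Scope classical_set_scope.
Local Open Scope ring_scope.

Section Automata.
Variables (Sigma : countType) (Q : finType).

Definition dstar (delta : Q -> Sigma -> Q) (q : Q) (w : seq Sigma) : Q :=
  foldl delta q w.

Definition strongly_connected (delta : Q -> Sigma -> Q) : Prop :=
  forall q q' : Q, exists w : seq Sigma, dstar delta q w = q'.

Fixpoint select (delta : Q -> Sigma -> Q) (F : {set Q}) (q : Q)
    (w : seq Sigma) : seq Sigma :=
  match w with
  | [::] => [::]
  | a :: w' => if q \in F then a :: select delta F (delta q a) w'
               else select delta F (delta q a) w'
  end.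
End Automata.
Arguments dstar {Sigma Q} delta q w.
Arguments strongly_connected {Sigma Q} delta.
Arguments select {Sigma Q} delta F q w.

Section Measure.
Context {R : realType} {Sigma : countType}.

Definition mu_word (p : Sigma -> R) (w : seq Sigma) : R := \prod_(a <- w) p a.

Definition mu_set {n : nat} (p : Sigma -> R) (W : set (n.-tuple Sigma)) : \bar R :=
  (\esum_(w in W) (mu_word p (tval w))%:E)%E.

Definition deviation (p : Sigma -> R) (v : seq Sigma) : R :=
  sup [set `|(count_mem a v)%:R / (size v)%:R - p a| | a in [set: Sigma]].

Definition Gq {Q : finType} (delta : Q -> Sigma -> Q) (F : {set Q})
    (p : Sigma -> R) (n : nat) (b eps : R) (q : Q) : set (n.-tuple Sigma) :=
  [set w | b * n%:R < (size (select delta F q (tval w)))%:R /\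
           eps <= deviation p (select delta F q (tval w))].

Definition G {Q : finType} (delta : Q -> Sigma -> Q) (F : {set Q})
    (p : Sigma -> R) (n : nat) (b eps : R) : set (n.-tuple Sigma) :=
  \bigcup_(q in [set: Q]) Gq delta F p n b eps q.
End Measure.

From HB Require Import structures.
From mathcomp Require Import all_boot all_order all_algebra.
From mathcomp Require Import all_classical all_reals all_analysis.
From mathcomp Require Import ring lra.
Import Order.TTheory GRing.Theory Num.Theory.
Local Open Scope classical_set_scope.
Local Open Scope ring_scope.

(* The letters read by the automaton while it is in F behave like independent
   samples of p, whatever the sequence of states.  Quantitatively: if phi is a
   function with phi^2 <= 1 which is centred under p, the sum of phi over the
   selected letters A_q[w] has second moment at most n (second_moment), since
   each new letter is either skipped or adds a centred increment.  Chebyshev's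
   inequality then bounds by 4/(b^2 e0^2 n) the mass of the words with
   |A_q[w]| > bn on which the frequency of an event deviates by e0 from its
   probability (event_bound).  As Sigma may be infinite, we fix a finite set S
   of letters carrying all but a mass d of p: a deviation >= eps of one letter
   forces a deviation >= eps/4 of one of the finitely many test events {a}
   (a in S) and Sigma \ S (deviation_witness), and a union bound over states
   and test events gives mu_p(G_n(b, eps)) <= C/n (mu_G_bound).  Since mu_p
   is a supremum of finite sums, all estimates are made for words over a
   finite alphabet T containing S; the restriction of p to T has mass in
   (1 - d, 1], which moves the test probabilities by at most eps/8
   (cond_prob_close). *)

Section Selection.
Variables (Sigma : countType) (Q : finType) (delta : Q -> Sigma -> Q).
Variable F : {set Q}.

Lemma select_rcons q w a :
  select delta F q (rcons w a) =
  select delta F q w ++ (if dstar delta q w \in F then [:: a] else [::]).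
Proof.
elim: w q => [|x w IH] q /=; first by case: (q \in F).
by rewrite IH; case: (q \in F).
Qed.
End Selection.

Section Words.
Variable X : eqType.

Fixpoint words (s : seq X) (n : nat) : seq (seq X) :=
  if n is n'.+1 then [seq rcons w a | w <- words s n', a <- s] else [:: [::]].

Lemma mem_words s n w : (w \in words s n) = (size w == n) && all (mem s) w.
Proof.
elim: n w => [|n IH] w /=; first by rewrite inE; case: w.
case/lastP: w => [|w a]; first by apply/allpairsP => -[[x y] /= [_ _]]; case: x.
rewrite size_rcons eqSS all_rcons.
apply/allpairsP/idP => [[[x y] /= [x_in y_in /eqP]]|/and3P [size_w a_in all_w]].
  rewrite eqseq_rcons => /andP [/eqP -> /eqP ->]; move: x_in; rewrite IH.
  by case/andP => -> ->; rewrite y_in.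
by exists (w, a); split => //=; rewrite IH size_w all_w.
Qed.

Lemma uniq_words s n : uniq s -> uniq (words s n).
Proof.
move=> uniq_s; elim: n => [|n IH] //=.
apply: allpairs_uniq => // -[x y] [x' y'] _ _ /= /eqP.
by rewrite eqseq_rcons => /andP [/eqP -> /eqP ->].
Qed.
End Words.
Arguments words {X}.

Section SubSums.
Variables (R : numDomainType) (I : eqType) (s1 s2 : seq I).
Hypotheses (uniq_s1 : uniq s1) (uniq_s2 : uniq s2) (sub12 : {subset s1 <= s2}).

Lemma big_mem_sub (f : I -> R) :
  \sum_(x <- s2 | x \in s1) f x = \sum_(x <- s1) f x.
Proof.
have perm_s1 : perm_eq [seq x <- s2 | x \in s1] s1.
  apply: uniq_perm => //; first exact: filter_uniq.
  by move=> x; rewrite mem_filter; case: (boolP (x \in s1)) => // /sub12 ->.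
by rewrite -(perm_big _ perm_s1) big_filter.
Qed.

Lemma ler_sum_sub (f : I -> R) : (forall x, 0 <= f x) ->
  \sum_(x <- s1) f x <= \sum_(x <- s2) f x.
Proof.
move=> f_ge0; rewrite -big_mem_sub [X in _ <= X](bigID (mem s1)) /= lerDl.
exact: sumr_ge0.
Qed.
End SubSums.

Lemma sum_count (R : numDomainType) (X : Type) (e : pred X) (r : R) (v : seq X) :
  \sum_(x <- v) ((e x)%:R - r) = (count e v)%:R - r * (size v)%:R.
Proof.
elim: v => [|x v IH]; first by rewrite big_nil mulr0 subr0.
rewrite big_cons IH /= natrD -addn1 natrD; ring.
Qed.

Lemma deviation_square (R : realFieldType) (c M r P x e0 : R) :
  0 <= x < M -> 0 <= e0 -> e0 <= `|c / M - P| -> `|r - P| <= e0 / 2 ->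
  (x * (e0 / 2)) ^+ 2 <= (c - r * M) ^+ 2.
Proof.
move=> /andP[x_ge0 x_lt_M] e0_ge0 far_P close_P.
have M_gt0 : 0 < M := le_lt_trans x_ge0 x_lt_M.
have far_r : e0 / 2 <= `|c / M - r| by have := ler_distD r (c / M) P; lra.
have -> : c - r * M = M * (c / M - r).
  by rewrite mulrBr mulrCA divff ?gt_eqF // mulr1 mulrC.
have half_ge0 : 0 <= e0 / 2 by lra.
have lin : x * (e0 / 2) <= `|M * (c / M - r)|.
  by rewrite normrM gtr0_norm // ler_pM // ltW.
have lin_ge0 : 0 <= x * (e0 / 2) by rewrite mulr_ge0.
by rewrite -[X in _ <= X]real_normK ?num_real // !expr2 ler_pM.
Qed.

Lemma renormalize_close (R : realFieldType) (m s P : R) :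
  0 <= m <= s -> 0 < s <= 1 -> `|m - P| <= 1 - s -> `|m / s - P| <= 2 * (1 - s).
Proof.
move=> /andP[m_ge0 m_le] /andP[s_gt0 s_le1].
have t_ge0 : 0 <= m / s by rewrite divr_ge0 // ltW.
have t_le1 : m / s <= 1 by rewrite ler_pdivrMr // mul1r.
rewrite -[X in `|X - P| <= _ -> _](divfK (lt0r_neq0 s_gt0)).
move: (m / s) t_ge0 t_le1 => t t_ge0 t_le1; rewrite !ler_norml; nra.
Qed.

Section SecondMoment.
Variables (R : realType) (Sigma : countType) (Q : finType).
Variables (delta : Q -> Sigma -> Q) (F : {set Q}) (p : Sigma -> R).
Hypothesis p_ge0 : forall a, 0 <= p a.
Variable T : seq Sigma.
Hypothesis mass_T : \sum_(a <- T) p a <= 1.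

Lemma mu_word_rcons w a : mu_word p (rcons w a) = mu_word p w * p a.
Proof. by rewrite /mu_word -cats1 big_cat big_seq1. Qed.

Lemma mu_word_ge0 w : 0 <= mu_word p w.
Proof. exact: prodr_ge0. Qed.

Lemma mass_words_le1 n : \sum_(w <- words T n) mu_word p w <= 1.
Proof.
elim: n => [|n IH] /=; first by rewrite big_seq1 /mu_word big_nil.
rewrite big_allpairs_dep; apply: le_trans IH; apply: ler_sum => w _.
under eq_bigr do rewrite mu_word_rcons.
by rewrite -mulr_sumr ler_piMr // mu_word_ge0.
Qed.

Section Centred.
Variable phi : Sigma -> R.
Hypotheses (phi_le1 : forall a, phi a ^+ 2 <= 1)
  (phi_centred : \sum_(a <- T) p a * phi a = 0).

Definition selected_sum q w := \sum_(x <- select delta F q w) phi x.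

Lemma centred_step (x : R) : \sum_(a <- T) p a * (x + phi a) ^+ 2 <= x ^+ 2 + 1.
Proof.
have -> : \sum_(a <- T) p a * (x + phi a) ^+ 2 =
    x ^+ 2 * \sum_(a <- T) p a + (2 * x) * \sum_(a <- T) p a * phi a
    + \sum_(a <- T) p a * phi a ^+ 2.
  by rewrite !mulr_sumr -!big_split /=; apply: eq_bigr => a _; ring.
rewrite phi_centred mulr0 addr0 lerD ?ler_piMr ?sqr_ge0 //.
by apply: le_trans mass_T; apply: ler_sum => a _; rewrite ler_piMr.
Qed.

(* The second moment of selected_sum over the words of length n is at most n:
   each letter either is skipped or adds a centred increment (centred_step). *)
Lemma second_moment q n :
  \sum_(w <- words T n) mu_word p w * selected_sum q w ^+ 2 <= n%:R.
Proof.
elim: n => [|n IH] /=.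
  by rewrite big_seq1 /selected_sum /= big_nil expr0n mulr0.
rewrite big_allpairs_dep -natr1; apply: le_trans (lerD IH (mass_words_le1 n)).
rewrite -big_split /=; apply: ler_sum => w _.
under eq_bigr do rewrite mu_word_rcons /selected_sum select_rcons big_cat -mulrA.
rewrite -mulr_sumr -[X in _ <= _ + X]mulr1 -mulrDr ler_wpM2l ?mu_word_ge0 //.
set X := \sum_(x <- select delta F q w) phi x.
case: (dstar delta q w \in F) => /=.
  under eq_bigr do rewrite big_seq1.
  exact: centred_step.
under eq_bigr do rewrite big_nil addr0.
rewrite -mulr_suml; apply: (@le_trans _ _ (X ^+ 2)); last by rewrite lerDl.
by rewrite ler_piMl ?sqr_ge0.
Qed.

Lemma chebyshev q (K : R) (bad : pred (seq Sigma)) n : 0 < K ->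
  (forall w, bad w -> K <= selected_sum q w ^+ 2) ->
  \sum_(w <- words T n | bad w) mu_word p w <= n%:R / K.
Proof.
move=> K_gt0 bad_large.
apply: (@le_trans _ _ (\sum_(w <- words T n) mu_word p w * selected_sum q w ^+ 2 / K)).
  rewrite [X in _ <= X](bigID bad) /= -[X in X <= _]addr0; apply: lerD.
    apply: ler_sum => w /bad_large bad_w.
    rewrite -mulrA -[X in X <= _]mulr1 ler_wpM2l ?mu_word_ge0 //.
    by rewrite ler_pdivlMr // mul1r.
  apply: sumr_ge0 => w _; rewrite divr_ge0 ?(ltW K_gt0) //.
  by rewrite mulr_ge0 ?mu_word_ge0 // sqr_ge0.
rewrite -mulr_suml ler_wpM2r ?invr_ge0 ?(ltW K_gt0) //.
exact: second_moment.
Qed.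
End Centred.

Definition freq_deviates (b e0 P : R) (e : pred Sigma) q n w : bool :=
  let v := select delta F q w in
  (b * n%:R < (size v)%:R) && (e0 <= `|(count e v)%:R / (size v)%:R - P|).

Lemma event_bound (b e0 P : R) (e : pred Sigma) q n :
  0 < b -> 0 < e0 -> 0 < \sum_(a <- T) p a ->
  `|(\sum_(a <- T) p a * (e a)%:R) / \sum_(a <- T) p a - P| <= e0 / 2 ->
  (0 < n)%N ->
  \sum_(w <- words T n | freq_deviates b e0 P e q n w) mu_word p w
    <= 4 / (b ^+ 2 * e0 ^+ 2) / n%:R.
Proof.
set s := \sum_(a <- T) p a; set r := _ / s => b_gt0 e0_gt0 s_gt0 r_close n_gt0.
have r_ge0 : 0 <= r.
  by rewrite divr_ge0 ?(ltW s_gt0) // sumr_ge0 // => a _; rewrite mulr_ge0.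
have r_le1 : r <= 1.
  by rewrite ler_pdivrMr // mul1r ler_sum // => a _; rewrite ler_piMr // lern1 leq_b1.
pose phi a := (e a)%:R - r.
have phi_le1 a : phi a ^+ 2 <= 1 by rewrite /phi; case: (e a) => /=; nra.
have phi_centred : \sum_(a <- T) p a * phi a = 0.
  rewrite /phi; under eq_bigr do rewrite mulrBr.
  by rewrite sumrB -mulr_suml -/s /r mulrC divfK ?subrr // gt_eqF.
have n_pos : 0 < n%:R :> R by rewrite ltr0n.
pose K := (b * n%:R * (e0 / 2)) ^+ 2.
have K_gt0 : 0 < K by rewrite exprn_gt0 // !mulr_gt0.
apply: le_trans (@chebyshev phi phi_le1 phi_centred q K _ n K_gt0 _) _.
  move=> w /andP[size_gt dev]; rewrite /selected_sum sum_count.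
  apply: (@deviation_square _ _ _ _ P) => //; last exact: ltW e0_gt0.
  by rewrite size_gt mulr_ge0 // ltW.
rewrite /K le_eqVlt; apply/orP; left; apply/eqP.
by field; rewrite ?mulf_neq0 ?gt_eqF ?expf_neq0 ?gt_eqF.
Qed.
End SecondMoment.
Arguments mu_word_ge0 {R Sigma p} p_ge0 w.
Arguments freq_deviates {R Sigma Q} delta F b e0 P e q n w.
Arguments event_bound {R Sigma Q delta F p} p_ge0 {T} mass_T {b e0 P e q n}.

Section Main.
Variables (R : realType) (Sigma : countType) (p : Sigma -> R).
Hypotheses (p_gt0 : forall a, 0 < p a)
  (p_sum1 : (\esum_(a in [set: Sigma]) (p a)%:E = 1)%E).
Variables (Q : finType) (delta : Q -> Sigma -> Q) (F : {set Q}) (b eps : R).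
Hypotheses (b_gt0 : 0 < b) (eps_gt0 : 0 < eps).
(* lra only reads the local context, so proofs below restate locally the
   section hypotheses their arithmetic needs. *)

Let p_ge0 a : 0 <= p a := ltW (p_gt0 a).

Lemma mass_le1 (S : seq Sigma) : uniq S -> \sum_(a <- S) p a <= 1.
Proof.
move=> uniq_S; rewrite -lee_fin -p_sum1; apply: esum_ge.
exists [set` S]; first by split; [exact: finite_seq | by []].
by rewrite -fsbig_seq // sumEFin.
Qed.

Lemma finite_approx (d : R) : 0 < d ->
  exists2 S : seq Sigma, uniq S & 1 - d < \sum_(a <- S) p a.
Proof.
move=> d_gt0.
have : ((1 - d)%:E < \esum_(a in [set: Sigma]) (p a)%:E)%E.
  by rewrite p_sum1 lte_fin; lra.
case/ereal_sup_gt => _ [X [finX _] <-].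
rewrite fsbig_finite // sumEFin lte_fin => mass_X.
by exists (finmap.enum_fset (fset_set X)) => //; exact: finmap.fset_uniq.
Qed.

Variables (d : R) (S : seq Sigma).
Hypotheses (d_small : 16 * d <= eps) (d_le1 : d <= 1).
Hypotheses (uniq_S : uniq S) (mass_S : 1 - d < \sum_(a <- S) p a).

Definition events : seq (option Sigma) := None :: map Some S.

Definition event_pred (E : option Sigma) : pred Sigma :=
  fun x => if E is Some a then x == a else x \notin S.

Definition event_prob (E : option Sigma) : R :=
  if E is Some a then p a else 1 - \sum_(x <- S) p x.

Lemma uniq_events : uniq events.
Proof.
rewrite /events /= (map_inj_uniq (@Some_inj _)) uniq_S andbT.
by apply/mapP => -[x _].
Qed.

Lemma deviation_witness v : v != [::] -> eps <= deviation p v ->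
  exists2 E, E \in events &
    eps / 4 <= `|(count (event_pred E) v)%:R / (size v)%:R - event_prob E|.
Proof.
move=> v_nil dev_v.
have eps_pos := eps_gt0; have d_eps := d_small; have S_large := mass_S.
have /sup_gt[|_ [a _ <-] dev_a] : eps / 2 < deviation p v by lra.
  by move: v_nil; clear dev_v; case: v => // a0 v _; eexists; exists a0.
have size_gt0 : 0 < (size v)%:R :> R by rewrite ltr0n lt0n size_eq0.
have freq_a_ge0 : 0 <= (count_mem a v)%:R / (size v)%:R :> R.
  by rewrite divr_ge0 // ltW.
case: (boolP (a \in S)) => aS.
  exists (Some a); first by rewrite inE map_f ?orbT.
  have -> : count (event_pred (Some a)) v = count_mem a v by apply: eq_count.
  rewrite /event_prob; lra.
exists None; first exact: mem_head.
have pa_small : p a <= 1 - \sum_(x <- S) p x.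
  by have := mass_le1 (a :: S); rewrite big_cons /= aS uniq_S => /(_ isT); lra.
have freq_le : (count_mem a v)%:R / (size v)%:R
    <= (count (event_pred None) v)%:R / (size v)%:R :> R.
  rewrite ler_wpM2r ?invr_ge0 ?(ltW size_gt0) // ler_nat.
  by apply: sub_count => x /eqP ->.
have pa_ge0 := p_ge0 a.
move: dev_a; rewrite ltr_normr => /orP [dev_a|dev_a]; last by lra.
by rewrite /event_prob ler_normr; apply/orP; left; lra.
Qed.

Definition deviating q n E (w : seq Sigma) : bool :=
  freq_deviates delta F b (eps / 4) (event_prob E) (event_pred E) q n w.

Lemma G_deviating n (w : n.-tuple Sigma) : G delta F p n b eps w ->
  exists q, exists2 E, E \in events & deviating q n E w.
Proof.
case=> q _ [size_gt dev_ge]; exists q.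
have v_nil : select delta F q w != [::].
  by apply: contraTneq size_gt => ->; rewrite -leNgt mulr_ge0 // ltW.
have [E E_ev dev_E] := deviation_witness _ v_nil dev_ge.
by exists E; rewrite // /deviating /freq_deviates size_gt dev_E.
Qed.

Section FiniteAlphabet.
Variable T : seq Sigma.
Hypotheses (uniq_T : uniq T) (S_sub_T : {subset S <= T}).

Lemma mass_T_bounds : 1 - d < \sum_(a <- T) p a <= 1.
Proof.
rewrite mass_le1 // andbT; apply: lt_le_trans mass_S _.
exact: ler_sum_sub.
Qed.

Lemma cond_prob_close E : E \in events ->
  `|(\sum_(a <- T) p a * (event_pred E a)%:R) / \sum_(a <- T) p a - event_prob E|
    <= eps / 4 / 2.
Proof.
move=> E_ev; have /andP[mass_gt mass_le] := mass_T_bounds.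
have d_le := d_le1; have d_eps := d_small.
have m_bounds : 0 <= \sum_(a <- T) p a * (event_pred E a)%:R <= \sum_(a <- T) p a.
  apply/andP; split; first by apply: sumr_ge0 => a _; rewrite mulr_ge0.
  by apply: ler_sum => a _; rewrite ler_piMr // lern1 leq_b1.
apply: le_trans (@renormalize_close _ _ _ (event_prob E) m_bounds _ _) _.
- by apply/andP; split; lra.
- case: E E_ev m_bounds => [a|] E_ev _.
    have aS : a \in S by move: E_ev; rewrite inE /= => /mapP [x xS [->]].
    have -> : \sum_(x <- T) p x * (event_pred (Some a) x)%:R = p a.
      rewrite (bigD1_seq a) ?S_sub_T //= eqxx mulr1 big1 ?addr0 //.
      by move=> x /negbTE ->; rewrite mulr0.
    by rewrite subrr normr0 subr_ge0.
  have -> : \sum_(x <- T) p x * (event_pred None x)%:R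
      = \sum_(a <- T) p a - \sum_(x <- S) p x.
    rewrite [in RHS](bigID (mem S)) /= big_mem_sub // addrAC subrr add0r.
    rewrite [in RHS]big_mkcond; apply: eq_bigr => x _ /=.
    by case: (x \in S); rewrite /= ?mulr0 ?mulr1.
  have -> : \sum_(a <- T) p a - \sum_(x <- S) p x - event_prob None
      = - (1 - \sum_(a <- T) p a) by rewrite /event_prob; ring.
  by rewrite normrN ger0_norm // subr_ge0.
- lra.
Qed.

Lemma deviating_mass q E n : E \in events -> (0 < n)%N ->
  \sum_(v <- words T n | deviating q n E v) mu_word p v
    <= 4 / (b ^+ 2 * (eps / 4) ^+ 2) / n%:R.
Proof.
move=> E_ev n_gt0; have /andP[mass_gt mass_le] := mass_T_bounds.
have eps_pos := eps_gt0; have d_le := d_le1.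
rewrite /deviating.
by apply: (event_bound p_ge0 mass_le b_gt0 _ _ (cond_prob_close _ E_ev) n_gt0); lra.
Qed.
End FiniteAlphabet.
Arguments deviating_mass {T} uniq_T S_sub_T q {E n}.

Definition union_constant : R :=
  \sum_(q : Q) \sum_(E <- events) 4 / (b ^+ 2 * (eps / 4) ^+ 2).

Lemma finite_bound n (A : seq (n.-tuple Sigma)) : (0 < n)%N -> uniq A ->
  (forall w, w \in A -> G delta F p n b eps w) ->
  \sum_(w <- A) mu_word p w <= union_constant / n%:R.
Proof.
move=> n_gt0 uniq_A A_G.
pose T := undup (S ++ flatten (map val A)).
have uniq_T : uniq T := undup_uniq _.
have S_sub_T : {subset S <= T} by move=> x xS; rewrite mem_undup mem_cat xS.
pose dev_mass q E v := if deviating q n E v then mu_word p v else 0.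
have dev_mass_ge0 q E v : 0 <= dev_mass q E v.
  by rewrite /dev_mass; case: ifP => // _; exact: mu_word_ge0 p_ge0 v.
apply: (@le_trans _ _ (\sum_(w <- A) \sum_(q : Q) \sum_(E <- events) dev_mass q E w)).
  rewrite big_seq [X in _ <= X]big_seq; apply: ler_sum => w /A_G/G_deviating.
  case=> q [E E_ev dev_w]; rewrite (bigD1 q) //= (bigD1_seq E E_ev uniq_events) /=.
  rewrite {1}/dev_mass dev_w -addrA lerDl addr_ge0 ?sumr_ge0 // => q' _.
  exact: sumr_ge0.
rewrite exchange_big /union_constant mulr_suml; apply: ler_sum => q _.
rewrite exchange_big /= mulr_suml big_seq [X in _ <= X]big_seq.
apply: ler_sum => E E_ev.
apply: le_trans (deviating_mass uniq_T S_sub_T q E_ev n_gt0).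
rewrite [X in _ <= X]big_mkcond /= -(big_map val xpredT (dev_mass q E)).
apply: ler_sum_sub => //; first by rewrite map_inj_uniq //; exact: val_inj.
  exact: uniq_words.
move=> v /mapP [w wA ->]; rewrite mem_words size_tuple eqxx /=.
apply/allP => x xw; rewrite /= mem_undup mem_cat; apply/orP; right.
by apply/flattenP; exists (val w) => //; exact: map_f.
Qed.

(* Hence mu_p(G_n(b, eps)), a supremum of such finite sums, is at most C/n. *)
Lemma mu_G_bound n : (0 < n)%N ->
  (mu_set p (G delta F p n b eps) <= (union_constant / n%:R)%:E)%E.
Proof.
move=> n_gt0; apply: ge_ereal_sup => _ [X [finX X_G] <-].
rewrite fsbig_finite // sumEFin lee_fin finite_bound //; first exact: finmap.fset_uniq.
by move=> w; rewrite in_fset_set // => /set_mem; exact: X_G.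
Qed.
End Main.
Arguments finite_approx {R Sigma p} p_sum1 {d}.
Arguments union_constant {R Sigma} Q b eps S.
Arguments mu_G_bound {R Sigma p} p_gt0 p_sum1 {Q delta F b eps} b_gt0 eps_gt0
  {d S} d_small d_le1 uniq_S mass_S {n}.

Lemma cvg0_inv_bound (R : realType) (u : nat -> \bar R) (C : R) :
  (forall n, 0 <= u n)%E -> (forall n, (0 < n)%N -> (u n <= (C / n%:R)%:E)%E) ->
  u @ \oo --> 0%E.
Proof.
move=> u_ge0 u_le.
suff : [sequence u n.+1]_n @ \oo --> 0%E by rewrite cvg_shiftS.
apply: (@squeeze_cvge _ _ _ _ (fun=> 0%E) _ (fun n => (C * harmonic n)%:E)).
- by apply: nearW => n; rewrite u_ge0 u_le.
- exact: cvg_cst.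
- apply: cvg_EFin; first exact: nearW.
  by rewrite -(mulr0 C); apply: cvgMl_tmp; exact: cvg_harmonic.
Qed.

Theorem corollary5p6 (R : realType) (Sigma : countType) (hne : inhabited Sigma)
    (p : Sigma -> R) (hp_pos : forall a, 0 < p a)
    (hp_sum : (\esum_(a in [set: Sigma]) (p a)%:E = 1)%E)
    (Q : finType) (delta : Q -> Sigma -> Q) (q_s : Q) (F : {set Q})
    (hsc : strongly_connected delta)
    (b eps : R) (hb0 : 0 < b) (hb1 : b <= 1) (heps : 0 < eps) :
  (fun n : nat => mu_set p (G delta F p n b eps)) @ \oo --> 0%E.
Proof.
pose d := Num.min (eps / 16) 1.
have d_gt0 : 0 < d by rewrite lt_min ltr01 andbT divr_gt0.
have d_le : d <= eps / 16 by rewrite ge_min lexx.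
have d_small : 16 * d <= eps by lra.
have d_le1 : d <= 1 by rewrite ge_min lexx orbT.
have [S uniq_S mass_S] := finite_approx hp_sum d_gt0.
apply: (@cvg0_inv_bound _ _ (union_constant Q b eps S)) => [n|n n_gt0].
  apply: esum_ge0 => w _.
  by rewrite lee_fin (mu_word_ge0 (fun a => ltW (hp_pos a))).
exact: (mu_G_bound hp_pos hp_sum hb0 heps d_small d_le1 uniq_S mass_S n_gt0).
Qed.
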